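(* In the setting described in the context, for every $\boldsymbol{y},\boldsymbol{y}'\in\mathbb{S}_+$, $k\in\mathbb{Z}_+$ and $l\in S_0$, we have $r^{(1)}_{\boldsymbol{y},(k,l)}=r^{(1)}_{\boldsymbol{y}',(k,l)}$ and $r^{(2)}_{\boldsymbol{y},(k,l)}=r^{(2)}_{\boldsymbol{y}',(k,l)}$.
   Context: Let $S_0=\{1,\dots,s_0\}$ be finite and $\{\boldsymbol{Y}_n\}=\{(X_{1,n},X_{2,n},J_n)\}$ a Markov chain on $\mathbb{S}=\mathbb{Z}^2\times S_0$ with $\mathbb{P}(\boldsymbol{Y}_{n+1}=(x_1+k,x_2+l,j')\mid\boldsymbol{Y}_n=(x_1,x_2,j))=[A_{k,l}]_{j,j'}$ for $k,l\in\{-1,0,1\}$ (no other transitions), where $A_{k,l}$ are nonnegative $s_0\times s_0$ matrices with $\sum A_{k,l}$ stochastic. Let $\mathbb{S}_+=\mathbb{Z}_+^2\times S_0$, $P_+$ the restriction of the transition matrix to $\mathbb{S}_+$, $\tau=\inf\{n\ge0:\boldsymbol{Y}_n\notin\mathbb{S}_+\}$, $\tilde q_{\boldsymbol{y},\boldsymbol{y}'}=\mathbb{E}\big(\sum_{n=0}^{\tau-1}1(\boldsymbol{Y}_n=\boldsymbol{y}')\mid\boldsymbol{Y}_0=\boldsymbol{y}\big)$. With $\boldsymbol\pi_{*,*}$ the stationary distribution of $\sum A_{k,l}$, let $a_1=\boldsymbol{\pi}_{*,*}\sum_l(A_{1,l}-A_{-1,l})\mathbf{1}$, $a_2=\boldsymbol{\pi}_{*,*}\sum_k(A_{k,1}-A_{k,-1})\mathbf{1}$.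 Standing assumptions: $\{\boldsymbol Y_n\}$ irreducible and aperiodic; $a_1<0$ or $a_2<0$; $P_+$ irreducible. For $\boldsymbol{y}\in\mathbb{S}_+$, $x_1',x_2'\in\mathbb{Z}_+$, $j'\in S_0$, define $\hat\varphi^{(1)}_{\boldsymbol{y},(x_2',j')}(z)=\sum_{k\ge0}\tilde q_{\boldsymbol{y},(k,x_2',j')}z^k$ and $\hat\varphi^{(2)}_{\boldsymbol{y},(x_1',j')}(z)=\sum_{k\ge0}\tilde q_{\boldsymbol{y},(x_1',k,j')}z^k$, and let $r^{(1)}_{\boldsymbol{y},(x_2',j')}$ and $r^{(2)}_{\boldsymbol{y},(x_1',j')}$ be their radii of convergence, i.e. $\sup\{r\ge0:\hat\varphi(r)<\infty\}$. *)

From HB Require Import structures.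
From mathcomp Require Import all_boot all_order all_algebra.
From mathcomp Require Import all_classical all_reals all_analysis.
Set Implicit Arguments. Unset Strict Implicit. Unset Printing Implicit Defensive.
Import Order.TTheory GRing.Theory Num.Theory.
Local Open Scope ring_scope.

(* States of S = Z^2 x S_0, with S_0 = {1..s0} encoded as 'I_s0. *)
Definition state (s0 : nat) := (int * int * 'I_s0)%type.

Definition dirs : seq int := [:: -1; 0; 1].

Definition inSp s0 (y : state s0) : bool := (0 <= y.1.1) && (0 <= y.1.2).

(* n-step transition probabilities of the chain whose moves are only allowed
   into states satisfying [ok]:  ok = predT gives P^n (the full chain),
   ok = inSp gives P_+^n (the chain restricted to S_+, i.e. killed on exit). *)
Fixpoint npow (R : realType) s0 (A : int -> int -> 'M[R]_s0)
  (ok : state s0 -> bool) (n : nat) (y y' : state s0) : R :=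
  match n with
  | 0 => (y == y')%:R
  | n.+1 => \sum_(k <- dirs) \sum_(l <- dirs) \sum_(j < s0)
       A k l y.2 j * (ok (y.1.1 + k, y.1.2 + l, j))%:R
         * npow A ok n (y.1.1 + k, y.1.2 + l, j) y'
  end.

Definition irreducible_on (R : realType) s0 (A : int -> int -> 'M[R]_s0)
  (ok : state s0 -> bool) (D : state s0 -> bool) : Prop :=
  forall y y', D y -> D y' -> exists n, 0 < npow A ok n y y'.

(* Aperiodicity of the full chain: every state has period 1, i.e. the gcd of
   {n >= 1 : P^n(y,y) > 0} is 1 (no d <> 1 divides all return times). *)
Definition aperiodic (R : realType) s0 (A : int -> int -> 'M[R]_s0) : Prop :=
  forall (y : state s0) (d : nat),
    (forall n, (0 < n)%N -> 0 < npow A predT n y y -> (d %| n)%N) -> d = 1%N.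

Definition Asum (R : realType) s0 (A : int -> int -> 'M[R]_s0) : 'M[R]_s0 :=
  \sum_(k <- dirs) \sum_(l <- dirs) A k l.

Definition stationary_dist (R : realType) s0 (A : int -> int -> 'M[R]_s0)
  (pi : 'rV[R]_s0) : Prop :=
  (forall j, 0 <= pi 0 j) /\ \sum_j pi 0 j = 1 /\ pi *m Asum A = pi.

Definition drift1 (R : realType) s0 (A : int -> int -> 'M[R]_s0)
  (pi : 'rV[R]_s0) : R :=
  (pi *m (\sum_(l <- dirs) (A 1 l - A (-1) l)) *m (const_mx 1 : 'cV[R]_s0)) 0 0.

Definition drift2 (R : realType) s0 (A : int -> int -> 'M[R]_s0)
  (pi : 'rV[R]_s0) : R :=
  (pi *m (\sum_(k <- dirs) (A k 1 - A k (-1))) *m (const_mx 1 : 'cV[R]_s0)) 0 0.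

(* tilde q_{y,y'} = E(sum_{n<tau} 1(Y_n = y') | Y_0 = y)
                  = sum_n P(Y_n = y', n < tau | Y_0 = y) = sum_n (P_+^n)_{y,y'} *)
Definition qt (R : realType) s0 (A : int -> int -> 'M[R]_s0)
  (y y' : state s0) : \bar R :=
  (\sum_(n <oo) (npow A (@inSp s0) n y y')%:E)%E.

Definition phi1 (R : realType) s0 (A : int -> int -> 'M[R]_s0)
  (y : state s0) (x2' : nat) (j' : 'I_s0) (z : R) : \bar R :=
  (\sum_(k <oo) (qt A y (k%:Z, x2'%:Z, j') * (z ^+ k)%:E))%E.

Definition phi2 (R : realType) s0 (A : int -> int -> 'M[R]_s0)
  (y : state s0) (x1' : nat) (j' : 'I_s0) (z : R) : \bar R :=
  (\sum_(k <oo) (qt A y (x1'%:Z, k%:Z, j') * (z ^+ k)%:E))%E.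

Definition radius (R : realType) (f : R -> \bar R) : \bar R :=
  ereal_sup [set r%:E | r in [set r : R | 0 <= r /\ (f r < +oo)%E]].

Definition r1 (R : realType) s0 (A : int -> int -> 'M[R]_s0)
  (y : state s0) (x2' : nat) (j' : 'I_s0) : \bar R := radius (phi1 A y x2' j').

Definition r2 (R : realType) s0 (A : int -> int -> 'M[R]_s0)
  (y : state s0) (x1' : nat) (j' : 'I_s0) : \bar R := radius (phi2 A y x1' j').

From Pilot Require Import Defs.
From HB Require Import structures.
From mathcomp Require Import all_boot all_order all_algebra.
From mathcomp Require Import all_classical all_reals all_analysis.
Set Implicit Arguments. Unset Strict Implicit.
Import Order.TTheory GRing.Theory Num.Theory.
Local Open Scope ring_scope.

(* If P_+^N(y', y) = c > 0, then c q~(y, w) <= q~(y', w) for every w, since a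
   path from y' may first reach y in N steps.  Hence every series
   sum_k q~(y, w_k) r^k is dominated by 1/c times the same series started at
   y', so irreducibility of P_+ makes all these series converge for the same
   r >= 0. *)

Lemma radius_le (R : realType) (f g : R -> \bar R) :
  (forall r, 0 <= r -> (g r < +oo)%E -> (f r < +oo)%E) ->
  (Defs.radius g <= Defs.radius f)%E.
Proof.
move=> gf; apply: ereal_sup_le => _ [r [r0 gr] <-].
by exists r => //; split => //; apply: gf.
Qed.

Lemma lt_pinfty_pmul_le (R : realType) (c : R) (x y : \bar R) :
  0 < c -> (0 <= x)%E -> (c%:E * x <= y)%E -> (y < +oo)%E -> (x < +oo)%E.
Proof.
move=> c0; case: x => [x| |] // _; first by rewrite ltry.
by rewrite mulry gtr0_sg // mul1e => /le_lt_trans/[apply]; rewrite ltxx.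
Qed.

Section RestrictedChain.
Variables (R : realType) (s0 : nat) (A : int -> int -> 'M[R]_s0).
Hypothesis A_ge0 : forall k l i j, 0 <= A k l i j.

Local Notation Pn := (npow A (@inSp s0)).

Lemma npow_ge0 (ok : state s0 -> bool) n y y' : 0 <= npow A ok n y y'.
Proof.
elim: n y => [|n IH] y /=; first by rewrite ler0n.
apply: sumr_ge0 => k _; apply: sumr_ge0 => l _; apply: sumr_ge0 => j _.
by rewrite !mulr_ge0 ?ler0n.
Qed.

Lemma npow_mul_le_npowD (ok : state s0 -> bool) n m y v w :
  npow A ok n y v * npow A ok m v w <= npow A ok (n + m) y w.
Proof.
elim: n y => [|n IH] y /=.
  rewrite add0n; case: eqP => [->|_]; first by rewrite mul1r.
  by rewrite mul0r npow_ge0.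
rewrite !big_distrl /=; apply: ler_sum => k _.
rewrite !big_distrl /=; apply: ler_sum => l _.
rewrite !big_distrl /=; apply: ler_sum => j _.
by rewrite -mulrA ler_wpM2l ?mulr_ge0 ?ler0n.
Qed.

Lemma qt_ge0 y w : (0 <= qt A y w)%E.
Proof. by apply: nneseries_ge0 => i _ _; rewrite lee_fin npow_ge0. Qed.

Lemma npow_mul_qt_le N y' y w : ((Pn N y' y)%:E * qt A y w <= qt A y' w)%E.
Proof.
have Pn_ge0 i : (0 <= (Pn i y' w)%:E)%E by rewrite lee_fin npow_ge0.
rewrite /qt -nneseriesZl; last by move=> i _; rewrite lee_fin npow_ge0.
apply: (@le_trans _ _ (\sum_(i <oo) (Pn (i + N) y' w)%:E)%E).
  apply: lee_nneseries => [i _ _|i _] /=.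
    by rewrite -EFinM lee_fin mulr_ge0 ?npow_ge0.
  by rewrite -EFinM lee_fin addnC npow_mul_le_npowD.
rewrite (@nneseries_addn R (fun i => (Pn i y' w)%:E) N) //.
rewrite [leRHS](@nneseries_split _ _ 0 N) // add0n leeDr //.
exact: sume_ge0.
Qed.

Definition qt_series (w : nat -> state s0) y (r : R) : \bar R :=
  (\sum_(k <oo) (qt A y (w k) * (r ^+ k)%:E))%E.

Lemma qt_series_ge0 w y r : 0 <= r -> (0 <= qt_series w y r)%E.
Proof.
by move=> r0; apply: nneseries_ge0 => k _ _; rewrite mule_ge0 ?qt_ge0 ?lee_fin ?exprn_ge0.
Qed.

Lemma npow_mul_qt_series_le N w y' y r : 0 <= r ->
  ((Pn N y' y)%:E * qt_series w y r <= qt_series w y' r)%E.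
Proof.
move=> r0; have rk_ge0 k : (0 <= (r ^+ k)%:E)%E by rewrite lee_fin exprn_ge0.
rewrite /qt_series -nneseriesZl; last by move=> k _; rewrite mule_ge0 ?qt_ge0.
apply: lee_nneseries => [k _ _|k _].
  by rewrite mule_ge0 ?lee_fin ?npow_ge0 // mule_ge0 ?qt_ge0.
by rewrite muleA lee_wpmul2r ?npow_mul_qt_le.
Qed.

Lemma radius_qt_series_le w y y' : (exists N, 0 < Pn N y' y) ->
  (Defs.radius (qt_series w y') <= Defs.radius (qt_series w y))%E.
Proof.
move=> [N PnN_gt0]; apply: radius_le => r r0.
exact: lt_pinfty_pmul_le PnN_gt0 (qt_series_ge0 w y r0)
  (npow_mul_qt_series_le N w y' y r0).
Qed.

End RestrictedChain.

Theorem proposition4p1 (R : realType) (s0 : nat) (A : int -> int -> 'M[R]_s0)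
  (pi : 'rV[R]_s0)
  (hs0 : (0 < s0)%N)
  (Anonneg : forall k l i j, 0 <= A k l i j)
  (Astoch : forall i, \sum_j Asum A i j = 1)
  (Hirr : irreducible_on A predT predT)
  (Haper : aperiodic A)
  (Hpi : stationary_dist A pi)
  (Hdrift : drift1 A pi < 0 \/ drift2 A pi < 0)
  (HirrP : irreducible_on A (@inSp s0) (@inSp s0)) :
  forall (x1 x2 x1' x2' : nat) (j j' : 'I_s0) (k : nat) (l : 'I_s0),
    r1 A (x1%:Z, x2%:Z, j) k l = r1 A (x1'%:Z, x2'%:Z, j') k l /\
    r2 A (x1%:Z, x2%:Z, j) k l = r2 A (x1'%:Z, x2'%:Z, j') k l.
Proof.
move=> x1 x2 x1' x2' j j' k l.
set y := (x1%:Z, x2%:Z, j); set y' := (x1'%:Z, x2'%:Z, j').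
have radius_eq w : Defs.radius (qt_series A w y) = Defs.radius (qt_series A w y').
  by apply: le_anti; rewrite !radius_qt_series_le //; apply: HirrP.
exact: (conj (radius_eq (fun i => (i%:Z, k%:Z, l)))
             (radius_eq (fun i => (k%:Z, i%:Z, l)))).
Qed.
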